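(* Let $T=\{0,\dots,N\}$ and $\mathbb{F}$ a field. Let $C_\bullet$, $C'_\bullet$ be filtrations of finite-dimensional chain complexes $C$, $C'$ over $\mathbb{F}$ with filtration compatible ordered bases $\mathfrak{C}$, $\mathfrak{C}'$ (each of size $n$) and filtration boundary matrices $D$, $D'$. Let $\varphi_\bullet\colon C_\bullet\to C'_\bullet$ be an injective morphism of filtrations of chain complexes with $\varphi=\varphi_N$ an isomorphism, $F$ its matrix with respect to $\mathfrak{C},\mathfrak{C}'$, and $D^{\varphi}=DF^{-1}=F^{-1}D'$. Let $V'$ and $V^{\varphi}$ be invertible upper-triangular matrices such that $R'=D'V'$ and $R^{\varphi}=D^{\varphi}V^{\varphi}$ are reduced. Then for every index $j$, the column $r^{\varphi}_j$ is zero if and only if the column $r'_j$ is zero.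
   Context: A chain complex is a finite-dimensional graded vector space with differential $\partial$ of degree $-1$, $\partial^2=0$; a filtration of chain complexes is a chain of subcomplexes $C_0\subseteq\dots\subseteq C_N=C$. A basis $\mathfrak{M}$ of $M_N$ is filtration compatible if $\mathfrak{M}\cap M_t$ is a basis of $M_t$ for all $t$; an ordered such basis is a filtration compatible ordered basis if $m\le m'$ implies $\{t\mid m'\in M_t\}\subseteq\{t\mid m\in M_t\}$. The filtration boundary matrix is the matrix of $\partial$ in that basis. For a matrix $X$, $x_j$ is its $j$-th column; for a nonzero column, its pivot is the largest row index of a nonzero entry; $X$ is reduced if no two nonzero columns have the same pivot. *)

From HB Require Import structures.
From mathcomp Require Import all_boot all_order all_algebra.
Set Implicit Arguments. Unset Strict Implicit. Unset Printing Implicit Defensive.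
Import GRing.Theory.
Local Open Scope ring_scope.

(* Pivot of column j of X (as a nat): the largest row index i with X i j != 0.
   Only meaningful (and only used) for nonzero columns. *)
Definition pivot (K : fieldType) (m n : nat) (X : 'M[K]_(m, n)) (j : 'I_n) : nat :=
  \max_(i < m | X i j != 0) (i : nat).

Definition reduced (K : fieldType) (m n : nat) (X : 'M[K]_(m, n)) : Prop :=
  forall j1 j2 : 'I_n, j1 != j2 -> col j1 X != 0 -> col j2 X != 0 ->
    pivot X j1 != pivot X j2.

Definition upper_triangular (K : fieldType) (n : nat) (V : 'M[K]_n) : Prop :=
  forall i j : 'I_n, (j < i)%N -> V i j = 0.

(* A filtration C_0 <= ... <= C_N = C of a finite-dimensional chain complex,
   presented through a filtration compatible ordered (homogeneous) basis
   c_0 < ... < c_(n-1):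
   - deg i   : the homological degree of the basis vector c_i,
   - birth i : the least t with c_i in C_t (so c_i in C_t iff birth i <= t);
               the ordering condition says birth is nondecreasing,
   - D       : the filtration boundary matrix (column j = coordinates of
               the boundary of c_j).
   C_t is the span of {c_i | birth i <= t}; each C_t is a subcomplex. *)
Definition filtered_complex (K : fieldType) (N n : nat) (deg : 'I_n -> nat)
    (birth : 'I_n -> 'I_N.+1) (D : 'M[K]_n) : Prop :=
  [/\ forall i j : 'I_n, (i <= j)%N -> (birth i <= birth j)%N,
      D *m D = 0,
      forall i j : 'I_n, D i j != 0 -> deg j = (deg i).+1 &
      forall i j : 'I_n, D i j != 0 -> (birth i <= birth j)%N].

(* Fm is the matrix (column j = coordinates of phi(c_j) in the basis c'),
   of an injective morphism of filtrations of chain complexes phi_. *)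
Definition injective_filt_morphism (K : fieldType) (N n : nat)
    (deg deg' : 'I_n -> nat) (birth birth' : 'I_n -> 'I_N.+1)
    (D D' Fm : 'M[K]_n) : Prop :=
  [/\ Fm *m D = D' *m Fm,
      forall i j : 'I_n, Fm i j != 0 -> deg' i = deg j,
      forall i j : 'I_n, Fm i j != 0 -> (birth' i <= birth j)%N
                                         (* phi(C_t) <= C'_t *) &
      forall (t : 'I_N.+1) (v : 'cV[K]_n),
        (forall i : 'I_n, (t < birth i)%N -> v i 0 = 0) ->
        Fm *m v = 0 -> v = 0                      (* each phi_t injective *)].

From HB Require Import structures.
From mathcomp Require Import all_boot all_order all_algebra.
Import GRing.Theory.
Local Open Scope ring_scope.
Set Implicit Arguments. Unset Strict Implicit. Unset Printing Implicit Defensive.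

(* Let rho_Y(k) be the rank of the first k columns of Y. In a reduced matrix
   the nonzero columns are linearly independent (look at the row of the
   largest pivot occurring in a dependency), so column j of a reduced Y is zero
   iff rho_Y(j+1) = rho_Y(j). Now rho_Y is invariant under left multiplication
   by an invertible matrix and under right multiplication by an invertible
   upper-triangular one, and R^phi = D F^-1 V^phi = F^-1 D' V^phi, so R^phi
   and R' = D' V' both have the rank profile of D'. *)

Section ColumnRankProfile.
Variable K : fieldType.

Lemma leq_pivot m n (Y : 'M[K]_(m, n)) (i : 'I_m) (j : 'I_n) :
  Y i j != 0 -> (i <= pivot Y j)%N.
Proof. exact: (leq_bigmax_cond i). Qed.

Lemma pivotP m n (Y : 'M[K]_(m, n)) (j : 'I_n) :
  col j Y != 0 -> exists2 i : 'I_m, (i : nat) = pivot Y j & Y i j != 0.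
Proof.
move=> Yj; have [i Yij] : exists i, Y i j != 0.
  apply/existsP; apply: contraR Yj => /existsPn Yj0.
  by apply/eqP/colP => i; rewrite !mxE; apply/eqP/negbNE.
have nonempty : (0 < #|[pred i : 'I_m | Y i j != 0%R]|)%N.
  by apply/card_gt0P; exists i.
have [i0 Yi0 pivotE] := eq_bigmax_cond (fun i : 'I_m => val i) nonempty.
by exists i0; rewrite // /pivot pivotE.
Qed.

Lemma reduced_mulmx_eq0 m n (Y : 'M[K]_(m, n)) (d : 'cV[K]_n) (j : 'I_n) :
  reduced Y -> Y *m d = 0 -> col j Y != 0 -> d j 0 = 0.
Proof.
move=> redY Yd0 Yj; apply/eqP; apply: contraT => dj.
pose S := [pred i : 'I_n | (col i Y != 0) && (d i 0 != 0)].
have nonempty : (0 < #|S|)%N by apply/card_gt0P; exists j; rewrite inE Yj.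
have [i0 /andP[Yi0 di0] maxi0] := eq_bigmax_cond (pivot Y) nonempty.
have [p pE Ypi0] := pivotP Yi0.
suff : (Y *m d) p 0 != 0 by rewrite Yd0 mxE eqxx.
rewrite mxE (bigD1 i0) //= big1 ?addr0 ?mulf_neq0 // => i ne_i.
have [-> | di] := eqVneq (d i 0) 0; first by rewrite mulr0.
have [Yi | Yi] := eqVneq (col i Y) 0.
  by move/colP/(_ p): Yi; rewrite !mxE => ->; rewrite mul0r.
have lt_piv : (pivot Y i < pivot Y i0)%N.
  rewrite ltn_neqAle redY // -maxi0.
  by apply: (@leq_bigmax_cond _ S); rewrite inE Yi di.
suff -> : Y p i = 0 by rewrite mul0r.
by apply: contraTeq lt_piv => /leq_pivot; rewrite pE -leqNgt.
Qed.

Lemma mulmx_pid_mxE m n (A : 'M[K]_(m, n)) k i l :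
  (A *m pid_mx k) i l = if (l < k)%N then A i l else 0.
Proof.
rewrite mxE (bigD1 l) //= big1 => [|r ne_rl]; last first.
  by rewrite mxE val_eqE (negbTE ne_rl) mulr0.
by rewrite mxE eqxx addr0; case: ifP; rewrite ?mulr1 ?mulr0.
Qed.

Lemma pid_mx_mulmxE m n (A : 'M[K]_(m, n)) k i l :
  (pid_mx k *m A) i l = if (i < k)%N then A i l else 0.
Proof.
rewrite mxE (bigD1 i) //= big1 => [|r ne_ri]; last first.
  by rewrite mxE val_eqE eq_sym (negbTE ne_ri) mul0r.
by rewrite mxE eqxx addr0; case: ifP; rewrite ?mul1r ?mul0r.
Qed.

Definition prefix_rank m n (Y : 'M[K]_(m, n)) (k : nat) : nat :=
  \rank (Y *m (pid_mx k : 'M_n)).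

Lemma prefix_rank_tr m n (Y : 'M[K]_(m, n)) k :
  prefix_rank Y k = \rank ((pid_mx k : 'M_n) *m Y^T).
Proof. by rewrite /prefix_rank -mxrank_tr trmx_mul tr_pid_mx. Qed.

Lemma prefix_rank_mull m n (G : 'M[K]_m) (Y : 'M[K]_(m, n)) k :
  G \in unitmx -> prefix_rank (G *m Y) k = prefix_rank Y k.
Proof.
rewrite -row_full_unit /prefix_rank -mulmxA => fullG.
by rewrite (eqmxMfull _ fullG).
Qed.

Lemma eqmx_pid_mx_trmx_upper n (V : 'M[K]_n) k :
  upper_triangular V -> V \in unitmx ->
  ((pid_mx k : 'M_n) *m V^T :=: (pid_mx k : 'M_n))%MS.
Proof.
move=> Vup uV; set P : 'M_n := pid_mx k.
have sub_pid : (P *m V^T <= P)%MS.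
  suff -> : P *m V^T = (P *m V^T) *m P by apply: submxMl.
  apply/matrixP => i l; rewrite mulmx_pid_mxE !pid_mx_mulmxE.
  case: (ltnP i k) => // lt_ik; case: ltnP => // le_kl.
  by rewrite mxE Vup //; apply: leq_trans le_kl.
apply/eqmxP; rewrite -(mxrank_leqif_eq sub_pid).
by rewrite mxrankMfree // row_free_unit unitmx_tr.
Qed.

Lemma prefix_rank_mulr_upper m n (Y : 'M[K]_(m, n)) (V : 'M[K]_n) k :
  upper_triangular V -> V \in unitmx -> prefix_rank (Y *m V) k = prefix_rank Y k.
Proof.
move=> Vup uV; rewrite !prefix_rank_tr trmx_mul mulmxA.
by rewrite (eqmxMr _ (eqmx_pid_mx_trmx_upper k Vup uV)).
Qed.

Lemma prefix_rank_col0 m n (Y : 'M[K]_(m, n)) (j : 'I_n) :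
  col j Y = 0 -> prefix_rank Y j.+1 = prefix_rank Y j.
Proof.
move=> Yj0; rewrite /prefix_rank; congr mxrank.
apply/matrixP => i l; rewrite !mulmx_pid_mxE ltnS leq_eqVlt.
have [l_j | //] := eqVneq (val l) (val j).
move/colP/(_ i): Yj0; rewrite !mxE (val_inj l_j) => ->.
by rewrite !if_same.
Qed.

Lemma prefix_rank_ltS m n (Y : 'M[K]_(m, n)) (j : 'I_n) :
  reduced Y -> col j Y != 0 -> (prefix_rank Y j < prefix_rank Y j.+1)%N.
Proof.
move=> redY Yj; rewrite !prefix_rank_tr.
set A := pid_mx j *m Y^T; set B := pid_mx j.+1 *m Y^T.
have sAB : (A <= B)%MS.
  suff -> : A = pid_mx j *m B by apply: submxMl.
  apply/matrixP => i l; rewrite !pid_mx_mulmxE.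
  by case: ltnP => // lt_ij; rewrite ltnW.
rewrite (ltn_leqif (mxrank_leqif_sup sAB)); apply/negP => sBA.
have /submxP[c cE] : (row j Y^T <= A)%MS.
  apply: submx_trans sBA; suff -> : row j Y^T = row j B by apply: row_sub.
  by apply/rowP => l; rewrite [LHS]mxE [RHS]mxE pid_mx_mulmxE ltnSn.
pose d := (delta_mx 0 j - c *m pid_mx j)^T.
have Yd0 : Y *m d = 0.
  apply: trmx_inj; rewrite trmx_mul trmxK trmx0 mulmxBl -rowE.
  by rewrite -mulmxA -cE subrr.
suff : d j 0 = 1.
  by rewrite (reduced_mulmx_eq0 redY Yd0 Yj) => /eqP; rewrite eq_sym oner_eq0.
by rewrite /d 4!mxE mulmx_pid_mxE ltnn oppr0 addr0 !eqxx.
Qed.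

Lemma reduced_col_eq0 m n (Y : 'M[K]_(m, n)) (j : 'I_n) :
  reduced Y -> (col j Y == 0) = (prefix_rank Y j.+1 == prefix_rank Y j).
Proof.
move=> redY; have [/prefix_rank_col0 -> | Yj] := eqVneq (col j Y) 0.
  by rewrite eqxx.
by rewrite gtn_eqF // prefix_rank_ltS.
Qed.

End ColumnRankProfile.

Theorem proposition3p10 (K : fieldType) (N n : nat)
    (deg deg' : 'I_n -> nat) (birth birth' : 'I_n -> 'I_N.+1)
    (D D' Fm V' Vphi : 'M[K]_n) :
  filtered_complex deg birth D ->
  filtered_complex deg' birth' D' ->
  injective_filt_morphism deg deg' birth birth' D D' Fm ->
  Fm \in unitmx ->
  upper_triangular V' -> V' \in unitmx ->
  upper_triangular Vphi -> Vphi \in unitmx ->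
  reduced (D' *m V') ->
  reduced ((D *m invmx Fm) *m Vphi) ->
  forall j : 'I_n,
    (col j ((D *m invmx Fm) *m Vphi) == 0) = (col j (D' *m V') == 0).
Proof.
move=> _ _ [FD _ _ _] uF V'up uV' Vup uV red' red_phi j.
have Dphi : D *m invmx Fm = invmx Fm *m D'.
  rewrite -[LHS]mul1mx -(mulVmx uF) -!mulmxA (mulmxA Fm) FD.
  by rewrite -mulmxA mulmxV ?mulmx1.
have uFinv : invmx Fm \in unitmx by rewrite unitmx_inv.
rewrite (reduced_col_eq0 j red_phi) (reduced_col_eq0 j red').
rewrite !(prefix_rank_mulr_upper _ _ Vup uV) !(prefix_rank_mulr_upper _ _ V'up uV').
by rewrite Dphi !(prefix_rank_mull _ _ uFinv).
Qed.
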